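(* Let $m\ge2$, $n\ge1$, and for $w\in G(m,1,n)$ let $\mathrm{inv}(w)=\sum_{i=1}^n\mathrm{inv}_i(w)$ $(=L(w))$. Then $$\sum_{w\in G(m,1,n)}q^{\mathrm{inv}(w)}=\sum_{w\in G(m,1,n)}q^{L(w)}=\prod_{i=1}^n[im]_q,\qquad [k]_q=\frac{1-q^k}{1-q}.$$
   Context: $\varepsilon=e^{2\pi i/m}$; $e_1,\dots,e_n$ the standard basis of $\mathbb C^n$. $G(m,1,n)$ is the group of $n\times n$ monomial matrices whose nonzero entries are $m$-th roots of unity; $w$ is written $w(j)=\varepsilon^{r_j}\beta_j$ ($\beta\in S_n$, $0\le r_j\le m-1$) and acts by $w(e_j)=\varepsilon^{r_j}e_{\beta_j}$. Let $\Phi=\{\varepsilon^ie_j-\varepsilon^ke_l:\varepsilon^ie_j\ne\varepsilon^ke_l,\ 0\le i,k\le m-1,\ 1\le j,l\le n\}$, $\Phi^+=\{\varepsilon^ie_j-\varepsilon^ke_j:0\le i<k\le m-1\}\cup\{e_j-\varepsilon^ke_l:0\le k\le m-1,\ 1\le l<j\le n\}\cup\{\varepsilon^ie_j-\varepsilon^ke_l: 0\le i,k\le m-1,\ k\ne0,\ 1\le j<l\le n\}$, $\Phi^-=\Phi\setminus\Phi^+$, $\Delta=\{e_j-\varepsilon^ke_l\in\Phi: 0\le k\le m-1,\ 1\le l\le j\le n\}$, $L(w)=|w(\Delta)\cap\Phi^-|$. For $i=1,\dots,n$, $\Delta_i=\{e_{n+1-i}-\varepsilon^ke_{n+1-i}:0<k\le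 m-1\}\cup\{e_{n+1-i}-\varepsilon^ke_j:0\le k\le m-1,\ j<n+1-i\}$ and $\mathrm{inv}_i(w)=|w(\Delta_i)\cap\Phi^-|$. *)

From mathcomp Require Import all_boot all_order all_algebra all_fingroup.
Set Implicit Arguments. Unset Strict Implicit. Unset Printing Implicit Defensive.
Import GRing.Theory.

(* Conventions (0-based indices): coordinates j : 'I_n stand for e_(j+1);
   exponents i : 'I_m stand for eps^i with eps = exp(2 pi i/m).           *)

(* An element w of G(m,1,n), written w(j) = eps^(r_j) beta_j, encoded as the
   pair (beta, r) ; w(e_j) = eps^(r_j) e_(beta j).                        *)
Definition Gm1n (n m : nat) := ({perm 'I_n} * {ffun 'I_n -> 'I_m})%type.

(* "signed basis vector" eps^i e_j, encoded as (i, j) *)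
Definition sbv (n m : nat) := ('I_m * 'I_n)%type.

(* formal root eps^i e_j - eps^k e_l, encoded as ((i,j),(k,l)) *)
Definition root_t (n m : nat) := (sbv n m * sbv n m)%type.

(* exponent addition modulo m (the default is never used when m > 0) *)
Definition addE (m : nat) (a b : 'I_m) : 'I_m := insubd a ((a + b) %% m).

Section Roots.
Variables (n m : nat).

Definition Phi : {set root_t n m} := [set x | x.1 != x.2].

Definition is_pos (x : root_t n m) : bool :=
  let: ((i, j), (k, l)) := x in
  [|| (j == l) && (i < k)%N ,
      (nat_of_ord i == 0%N) && (l < j)%N
    | (nat_of_ord k != 0%N) && (j < l)%N ].

Definition Phip : {set root_t n m} := [set x in Phi | is_pos x].
Definition Phim : {set root_t n m} := Phi :\: Phip.

Definition Delta : {set root_t n m} :=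
  [set x in Phi | (nat_of_ord x.1.1 == 0%N) && (x.2.2 <= x.1.2)%N].

(* Delta_i for 1 <= i <= n : the coordinate n+1-i (1-based) is n-i (0-based) *)
Definition Delta_i (i : nat) : {set root_t n m} :=
  [set x | [&& nat_of_ord x.1.1 == 0%N, nat_of_ord x.1.2 == (n - i)%N &
     ((x.2.2 == x.1.2) && (nat_of_ord x.2.1 != 0%N)) || (x.2.2 < x.1.2)%N]].

Definition act_sbv (w : Gm1n n m) (a : sbv n m) : sbv n m :=
  (addE a.1 (w.2 a.2), w.1 a.2).

Definition act_root (w : Gm1n n m) (x : root_t n m) : root_t n m :=
  (act_sbv w x.1, act_sbv w x.2).

Definition L (w : Gm1n n m) : nat :=
  #|[set act_root w x | x in Delta] :&: Phim|.

Definition inv_i (w : Gm1n n m) (i : nat) : nat :=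
  #|[set act_root w x | x in Delta_i i] :&: Phim|.

Definition invt (w : Gm1n n m) : nat := \sum_(1 <= i < n.+1) inv_i w i.

End Roots.

(* q-integer [k]_q = (1 - q^k)/(1 - q) = 1 + q + ... + q^(k-1), as a polynomial in q *)
Definition qint (k : nat) : {poly int} := \sum_(j < k) 'X^j.

From mathcomp Require Import all_boot all_order all_algebra all_fingroup.
From mathcomp Require Import zify.
Import GRing.Theory.
Set Implicit Arguments. Unset Strict Implicit. Unset Printing Implicit Defensive.

(* For w = (beta, r) in G(m,1,n) and a coordinate p, let N_p(w) count the
   roots x = e_p - eps^k e_l of Delta "based at p" (l <= p) whose image w(x)
   is negative.  Delta is the disjoint union of these based parts, and Delta_i
   is exactly the part based at coordinate n - i (0-based), so
   L(w) = sum_p N_p(w) = inv(w).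
   A direct count, over l and k, gives
     N_p(w) = r_p + A_p + [r_p > 0] * m * B_p,
   where A_p (resp. B_p) is the number of l < p with beta_l > beta_p
   (resp. beta_l < beta_p), so A_p + B_p = p and N_p(w) < (p+1) m.
   From N_p(w) one recovers r_p and A_p (Euclidean division by m), and from
   the inversion table A one recovers beta (Lehmer code).  Hence
   w |-> (N_p(w))_p is injective; as |G(m,1,n)| = n! m^n = prod_p (p+1) m,
   it is a bijection onto prod_p [0, (p+1) m), and
     sum_w q^L(w) = prod_p (1 + q + ... + q^((p+1) m - 1)).
   The file proves, in order: counting lemmas, the reduction L = sum N_p = inv,
   the formula for N_p, its decoding, the Lehmer code, and the bijection. *)

Lemma card_set_sum (T : finType) (P : pred T) : #|[set x | P x]| = \sum_x (P x : nat).
Proof. by rewrite -sum1dep_card big_mkcond; apply: eq_bigr => x _; case: (P x). Qed.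

Lemma sum_ord_lt {N a : nat} : a <= N -> \sum_(i < N) (i < a : nat) = a.
Proof.
move=> aN; rewrite -[RHS](minn_idPl aN); elim: N {aN} => [|N IH].
  by rewrite big_ord0 minn0.
by rewrite big_ord_recr /= IH; case: (leqP a N) => h; lia.
Qed.

Lemma sum_shift {V : finZmodType} (c : V) (F : V -> nat) :
  \sum_(x : V) F (x + c)%R = \sum_(x : V) F x.
Proof. by rewrite [RHS](reindex_inj (addIr c)). Qed.

Lemma card_imset_setI (aT rT : finType) (f : aT -> rT) (A : {set aT}) (B : {set rT}) :
  injective f -> #|f @: A :&: B| = #|[set x in A | f x \in B]|.
Proof.
move=> f_inj; rewrite -[RHS](card_imset _ f_inj); apply: eq_card => y.
rewrite !inE; apply/andP/imsetP.
- by case=> /imsetP [x xA ->] fxB; exists x => //; rewrite inE xA.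
- by case=> x; rewrite inE => /andP [xA fxB] ->; rewrite imset_f.
Qed.

Lemma euclid_unique {d q q' s s' : nat} : s < d -> s' < d ->
  s + d * q = s' + d * q' -> s = s' /\ q = q'.
Proof.
move=> ltsd lts'd E; have := edivn_eq q ltsd; rewrite addnC mulnC E.
by rewrite addnC mulnC edivn_eq // => -[-> ->].
Qed.

Section Action.
Variables (n m : nat).
Notation M := m.+1.
Notation G := (Gm1n n M).

Lemma addE_Zp (a b : 'I_M) : addE a b = (a + b)%R.
Proof. by apply: val_inj; rewrite /addE val_insubd ltn_pmod. Qed.

Lemma act_sbv_inj (w : G) : injective (act_sbv w).
Proof.
move=> [a1 a2] [b1 b2] [] /=; rewrite !addE_Zp => E1 /perm_inj E2; subst b2.
by rewrite (addIr _ E1).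
Qed.

Lemma act_root_inj (w : G) : injective (act_root w).
Proof.
move=> [x1 x2] [y1 y2] E.
by move: (congr1 fst E) (congr1 snd E) => /= /act_sbv_inj -> /act_sbv_inj ->.
Qed.

Definition Delta_at (p : nat) : {set root_t n M} :=
  [set x in Delta n M | x.1.2 == p :> nat].

Definition neg_count (w : G) (p : nat) : nat :=
  #|[set act_root w x | x in Delta_at p] :&: Phim n M|.

Lemma Delta_i_at (i : nat) : Delta_i n M i = Delta_at (n - i).
Proof.
apply/setP => -[[a b] [c d]]; rewrite !inE /= xpair_eqE -!val_eqE /=.
by apply/idP/idP; lia.
Qed.

(* Delta is the disjoint union of its based parts, so L = sum_p N_p. *)
Lemma L_neg_count (w : G) : L w = \sum_(p < n) neg_count w p.
Proof.
rewrite /L card_imset_setI; last exact: act_root_inj.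
rewrite -sum1_card (partition_big (fun x : root_t n M => x.1.2) predT) //=.
apply: eq_bigr => p _; rewrite /neg_count card_imset_setI; last exact: act_root_inj.
by rewrite -sum1_card; apply: eq_bigl => x; rewrite !inE andbAC.
Qed.

(* inv = L, by reindexing i |-> n - i. *)
Lemma invt_L (w : G) : invt w = L w.
Proof.
rewrite /invt /inv_i L_neg_count -(big_mkord xpredT (neg_count w)) big_add1 /=.
rewrite big_nat_rev /=; apply: eq_big_nat => i /andP [_ lt_in].
by rewrite Delta_i_at; congr neg_count; lia.
Qed.

End Action.

Section Formula.
Variables (n m : nat) (b : {perm 'I_n}) (r : {ffun 'I_n -> 'I_m.+1}).
Notation M := m.+1.
Notation w := ((b, r) : Gm1n n M).

Definition left_inv (p : 'I_n) : nat := \sum_(l < n) ((l < p) && (b p < b l)).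
Definition left_noninv (p : 'I_n) : nat := \sum_(l < n) ((l < p) && (b l < b p)).

Lemma left_inv_noninv (p : 'I_n) : left_inv p + left_noninv p = p.
Proof.
rewrite -big_split /= -[RHS](sum_ord_lt (ltnW (ltn_ord p))); apply: eq_bigr => l _.
case: (ltnP l p) => [lt_lp|] //=.
have : b l != b p by rewrite (inj_eq perm_inj) neq_ltn lt_lp.
by rewrite neq_ltn; case: ltngtP.
Qed.

Lemma Delta_at_based (p : 'I_n) : Delta_at n m p =
  [set ((ord0, p), y) | y in [set y : sbv n M | ((ord0, p) != y) && (y.2 <= p)]].
Proof.
apply/setP => -[[i j] y]; rewrite !inE /=; apply/idP/imsetP.
- case/andP => /and3P [neq i0 le_yj] /eqP jp.
  have ei : i = ord0 by apply: val_inj; apply/eqP.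
  have ej : j = p by apply: val_inj.
  by rewrite ei ej in neq le_yj *; exists y; rewrite // inE neq le_yj.
- case=> y'; rewrite inE => /andP [neq le_yp] [-> -> ->] /=.
  by rewrite neq le_yp eqxx.
Qed.

Lemma act_based_root (p l : 'I_n) (k : 'I_M) :
  act_root w ((ord0, p), (k, l)) = ((r p, b p), ((k + r l)%R, b l)).
Proof. by rewrite /act_root /act_sbv /= !addE_Zp add0r. Qed.

Definition neg_term (p l : 'I_n) (k : 'I_M) : bool :=
  [&& l <= p, (ord0, p) != (k, l) & ~~ is_pos (act_root w ((ord0, p), (k, l)))].

Lemma neg_count_sum (p : 'I_n) :
  neg_count w p = \sum_(l < n) \sum_(k < M) neg_term p l k.
Proof.
rewrite /neg_count Delta_at_based -imset_comp card_imset_setI; last first.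
  by move=> y y' /act_root_inj [].
rewrite card_set_sum (eq_bigr (fun y => neg_term p y.2 y.1 : nat)); last first.
  move=> [k l] _; rewrite !inE /= /neg_term (inj_eq (@act_sbv_inj _ _ w)).
  by case: ((ord0, p) != (k, l)); case: (l <= p); rewrite /= ?andbT.
by rewrite exchange_big pair_big; apply: eq_bigl.
Qed.
Lemma neg_term_diag (p : 'I_n) (k : 'I_M) : neg_term p p k = ((k + r p)%R < r p).
Proof.
rewrite /neg_term act_based_root leqnn xpair_eqE eqxx andbT /= eqxx ltnn !andbF orbF.
have -> : (ord0 != k) = ((k + r p)%R != r p).
  by rewrite -[X in _ = (_ != X)]add0r (inj_eq (addIr _)) eq_sym.
by rewrite andTb orbF -leqNgt ltn_neqAle.
Qed.

Lemma neg_term_above (p l : 'I_n) (k : 'I_M) : p < l -> neg_term p l k = false.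
Proof. by move=> lt_pl; rewrite /neg_term leqNgt lt_pl. Qed.

Lemma neg_term_below_larger (p l : 'I_n) (k : 'I_M) :
  l < p -> b p < b l -> neg_term p l k = ((k + r l)%R == 0%R).
Proof.
move=> lt_lp lt_b; have neq_pl : (p == l) = false by rewrite -val_eqE gtn_eqF.
rewrite /neg_term act_based_root (ltnW lt_lp) xpair_eqE neq_pl andbF /=.
by rewrite (inj_eq perm_inj) neq_pl (leq_gtF (ltnW lt_b)) lt_b andbF andbT negbK.
Qed.

Lemma neg_term_below_smaller (p l : 'I_n) (k : 'I_M) :
  l < p -> b l < b p -> neg_term p l k = (r p != 0%R).
Proof.
move=> lt_lp lt_b; have neq_pl : (p == l) = false by rewrite -val_eqE gtn_eqF.
rewrite /neg_term act_based_root (ltnW lt_lp) xpair_eqE neq_pl andbF /=.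
by rewrite (inj_eq perm_inj) neq_pl (leq_gtF (ltnW lt_b)) lt_b andbF andbT orbF.
Qed.

Lemma exponent_count (p l : 'I_n) : \sum_(k < M) neg_term p l k =
  (if l == p then nat_of_ord (r p) else 0) + ((l < p) && (b p < b l))
  + (0 < r p) * M * ((l < p) && (b l < b p)).
Proof.
case: (ltngtP l p) => [lt_lp | lt_pl | /val_inj ->].
- rewrite -val_eqE (ltn_eqF lt_lp) /=.
  have : b l != b p by rewrite (inj_eq perm_inj) -val_eqE ltn_eqF.
  rewrite neq_ltn => /orP [lt_b | lt_b].
  + under eq_bigr => k _ do rewrite neg_term_below_smaller //.
    by rewrite sum_nat_const card_ord lt0n (leq_gtF (ltnW lt_b)) lt_b muln1 mulnC.
  + under eq_bigr => k _ do rewrite neg_term_below_larger //.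
    rewrite (sum_shift (r l) (fun k => k == 0%R : nat)) (bigD1 0%R) //= big1.
      by rewrite (leq_gtF (ltnW lt_b)) lt_b muln0.
    by move=> k /negbTE ->.
- rewrite big1 => [|k _]; last by rewrite neg_term_above.
  by rewrite -val_eqE gtn_eqF // muln0.
- rewrite (eq_bigr (fun k => (k + r p)%R < r p : nat)) => [|k _]; last first.
    by rewrite neg_term_diag.
  rewrite (sum_shift (r p) (fun k => k < r p : nat)).
  by rewrite (sum_ord_lt (ltnW (ltn_ord (r p)))) eqxx muln0 !addn0.
Qed.

Lemma neg_count_formula (p : 'I_n) :
  neg_count w p = r p + left_inv p + (0 < r p) * M * left_noninv p.
Proof.
rewrite neg_count_sum (eq_bigr _ (fun l _ => exponent_count p l)).
by rewrite !big_split /= -big_mkcond big_pred1_eq -big_distrr.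
Qed.

Lemma neg_count_lt (p : 'I_n) : neg_count w p < p.+1 * M.
Proof.
rewrite neg_count_formula; have := left_inv_noninv p; have := ltn_ord (r p).
by case: (nat_of_ord (r p)) => [|s] /=; nia.
Qed.

End Formula.

(* The value r + A + [r > 0] (m+1) B, with r <= m and A + B = p, determines
   r and A: it is A <= p when r = 0, and p + 1 + (r - 1) + m B otherwise. *)
Lemma neg_count_decode (m p s s' A A' B B' : nat) : s < m.+1 -> s' < m.+1 ->
  A + B = p -> A' + B' = p ->
  s + A + (0 < s) * m.+1 * B = s' + A' + (0 < s') * m.+1 * B' -> s = s' /\ A = A'.
Proof.
have shape t C D : C + D = p ->
    t + C + (0 < t) * m.+1 * D = if t is t1.+1 then p.+1 + (t1 + m * D) else C.
  case: t => [|t1] eCD /=; first by rewrite !mul0n addn0.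
  by rewrite -eCD mul1n mulSn; lia.
move=> lt_s lt_s' eAB eAB'; rewrite (shape _ _ _ eAB) (shape _ _ _ eAB').
case: s lt_s => [|s1] lt_s; case: s' lt_s' => [|s1'] lt_s' E; try lia.
have [-> eqB] := euclid_unique (ltnSE lt_s) (ltnSE lt_s') (addnI E).
by split => //; lia.
Qed.

Section Lehmer.
Variable n : nat.
Implicit Types (b c : {perm 'I_n}) (p : 'I_n).

Definition free_values b p : {set 'I_n} := ~: [set b q | q in [set q : 'I_n | p < q]].

Lemma left_inv_free b p : left_inv b p = #|[set v in free_values b p | b p < v]|.
Proof.
rewrite /left_inv -card_set_sum -[LHS](card_imset _ (@perm_inj _ b)); apply: eq_card => v.
rewrite -[v](permKV b) !inE !(mem_imset _ _ (@perm_inj _ b)) !inE -leqNgt.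
by case: ltngtP => // /val_inj ->; rewrite ltnn andbF.
Qed.

Lemma free_values_self b p : b p \in free_values b p.
Proof. by rewrite !inE (mem_imset _ _ (@perm_inj _ b)) inE ltnn. Qed.

Lemma free_values_eq b c p :
  (forall q : 'I_n, p < q -> b q = c q) -> free_values b p = free_values c p.
Proof. by move=> bc; congr setC; apply: eq_in_imset => q; rewrite inE => /bc. Qed.

Lemma card_above_inj (S : {set 'I_n}) :
  {in S &, injective (fun v : 'I_n => #|[set u in S | v < u]|)}.
Proof.
have lt_card x y : x \in S -> y \in S -> x < y ->
    #|[set u in S | y < u]| < #|[set u in S | x < u]|.
  move=> xS yS lt_xy; apply: proper_card; apply/properP; split.
    by apply/subsetP => u; rewrite !inE => /andP [-> /(ltn_trans lt_xy)].
  by exists y; rewrite !inE ?yS ?lt_xy ?ltnn.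
move=> x y xS yS E; case: (ltngtP x y) => [lt_xy|lt_yx|/val_inj //].
- by have := lt_card _ _ xS yS lt_xy; rewrite E ltnn.
- by have := lt_card _ _ yS xS lt_yx; rewrite E ltnn.
Qed.

(* Recover b from right to left: b p is the free value with A_p values
   above it. *)
Lemma left_inv_inj b c : (forall p, left_inv b p = left_inv c p) -> b = c.
Proof.
move=> Ebc; apply/permP => p.
suff agree k (q : 'I_n) : n - k <= q -> b q = c q by apply: (agree n); lia.
elim: k q => [|k IH] q le_q; first by move: (ltn_ord q); lia.
case: (leqP (n - k) q) => [|lt_q]; first exact: IH.
have bc (q' : 'I_n) : q < q' -> b q' = c q' by move=> lt_qq'; apply: IH; lia.
apply: (@card_above_inj (free_values b q)).
- exact: free_values_self.
- by rewrite (free_values_eq bc); exact: free_values_self.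
- by rewrite -left_inv_free (Ebc q) left_inv_free (free_values_eq bc).
Qed.

End Lehmer.

Section Code.
Variables (n m : nat).
Notation M := m.+1.
Notation G := (Gm1n n M).
Notation N := (n * M).+1.

Lemma range_le (p : 'I_n) : p.+1 * M <= n * M.
Proof. by rewrite leq_mul2r ltn_ord orbT. Qed.

Lemma neg_count_le (w : G) (p : 'I_n) : neg_count w p <= n * M.
Proof. by case: w => b r; apply: leq_trans (ltnW (neg_count_lt b r p)) (range_le p). Qed.

Definition code (w : G) : {ffun 'I_n -> 'I_N} := [ffun p : 'I_n => inord (neg_count w p)].

Lemma code_val (w : G) (p : 'I_n) : code w p = neg_count w p :> nat.
Proof. by rewrite ffunE inordK // ltnS neg_count_le. Qed.

(* The code is injective: decode r and A entrywise, then b by Lehmer. *)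
Lemma code_inj : injective code.
Proof.
move=> [b r] [b' r'] /ffunP E.
have decode p : r p = r' p :> nat /\ left_inv b p = left_inv b' p.
  have := congr1 (@nat_of_ord N) (E p); rewrite !code_val !neg_count_formula.
  exact: neg_count_decode (ltn_ord _) (ltn_ord _)
    (left_inv_noninv b p) (left_inv_noninv b' p).
rewrite (left_inv_inj (fun p => (decode p).2)); congr pair.
by apply/ffunP => p; apply: val_inj; case: (decode p).
Qed.

Definition code_range (p : 'I_n) : pred 'I_N := fun c => c < p.+1 * M.

Lemma card_code_range (p : 'I_n) : #|code_range p| = p.+1 * M.
Proof. by rewrite -cardsE card_set_sum sum_ord_lt // leqW // range_le. Qed.

(* The image of the code is the full product of ranges: it is contained in
   it, and both have n! (m+1)^n elements. *)
Lemma image_code : code @: [set: G] = [set f | f \in family code_range].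
Proof.
apply/eqP; rewrite eqEcard; apply/andP; split.
  apply/subsetP => _ /imsetP [[b r] _ ->]; rewrite inE; apply/familyP => p.
  by rewrite unfold_in /= code_val neg_count_lt.
rewrite (card_imset _ code_inj) cardsE card_family foldrE big_map big_enum /=.
rewrite (eq_bigr _ (fun p _ => card_code_range p)) big_split /= prod_nat_const card_ord.
rewrite cardsT card_prod card_Sn card_ffun !card_ord.
by rewrite fact_prod big_add1 /= big_mkord.
Qed.

Local Open Scope ring_scope.

(* Transporting the generating function along the code, it factors as a
   product of q-integers. *)
Lemma generating_L :
  \sum_(w : G) ('X^(L w) : {poly int}) = \prod_(p < n) qint (p.+1 * M).
Proof.
transitivity (\sum_(w : G) \prod_(p < n) ('X^(code w p) : {poly int})).
  apply: eq_bigr => w _; rewrite L_neg_count -prodrXr.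
  by apply: eq_bigr => p _; rewrite code_val.
transitivity (\sum_(f in code @: [set: G]) \prod_(p < n) ('X^(f p) : {poly int})).
  by rewrite big_imset /=; [apply: eq_bigl => w; rewrite inE | exact: in2W code_inj].
rewrite image_code (eq_bigl (mem (family code_range))) => [|f]; last by rewrite inE.
rewrite -(bigA_distr_big_dep code_range (fun p (c : 'I_N) => ('X^c : {poly int}))).
by apply: eq_bigr => p _; rewrite (big_ord_narrow (leqW (range_le p))).
Qed.

End Code.

Local Open Scope ring_scope.

Theorem corollary4p1 (m n : nat) (hm : (2 <= m)%N) (hn : (1 <= n)%N) :
  \sum_(w : Gm1n n m) ('X^(invt w) : {poly int}) = \sum_(w : Gm1n n m) 'X^(L w) /\
  \sum_(w : Gm1n n m) 'X^(L w) = \prod_(1 <= i < n.+1) qint (i * m).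
Proof.
case: m hm => [|m] // _; split.
  by apply: eq_bigr => w _; rewrite invt_L.
by rewrite generating_L big_add1 /= big_mkord.
Qed.
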